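(* Let $f:\mathbb{R}^n\to\mathbb{R}$ be differentiable, $\mu$-strongly convex, with $L$-Lipschitz gradient $\nabla f$, and let $x^*$ be its unique minimizer. Given $\varepsilon>0$, suppose $\alpha<\left(\frac{4\varepsilon\mu}{L^2n}\right)^{1/2}$. Let $\mathcal{E}^t$ denote the event $\|\nabla f(x^t)\|_\infty\le\eta$. If $x\in\mathbb{R}^n$ satisfies $f(x)-f(x^* )>\varepsilon$, then the iterate $x^{t+1}$ of Markov gradient descent satisfies $$\mathbb{E}\left[f(x^{t+1})\,\middle|\,x^t=x,\mathcal{E}^t\right]<f(x).$$
   Context: A differentiable $f$ is $\mu$-strongly convex if $\langle\nabla f(x)-\nabla f(y),x-y\rangle\ge\mu\|x-y\|_2^2$ for all $x,y$. Markov gradient descent (MGD) with lattice resolution $\alpha>0$ and normalizer $\eta>0$: start at $x^0\in\alpha\mathbb{Z}^n$; at step $t$, for each coordinate $i$, conditionally on $x^t$, $\Delta^t_i\in\{0,1\}$ is Bernoulli with $\mathbb{P}[\Delta^t_i=1\mid x^t]=\min(|\partial_i f(x^t)|/\eta,1)$, and $x^{t+1}_i=x^t_i-\alpha\,\mathrm{sgn}(\partial_i f(x^t))\Delta^t_i$. *)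

From HB Require Import structures.
From mathcomp Require Import all_boot all_order all_algebra.
From mathcomp Require Import all_classical all_reals all_analysis.
Set Implicit Arguments. Unset Strict Implicit. Unset Printing Implicit Defensive.
Import Order.TTheory GRing.Theory Num.Theory.
Import numFieldNormedType.Exports.
Local Open Scope ring_scope.

Section MGD.
Variables (R : realType) (n : nat).

Definition dotv (x y : 'rV[R]_n) : R := \sum_(i < n) x ord0 i * y ord0 i.
Definition norm2 (x : 'rV[R]_n) : R := Num.sqrt (dotv x x).

Definition is_gradient (f : 'rV[R]_n -> R) (g : 'rV[R]_n -> 'rV[R]_n) : Prop :=
  forall x, differentiable f x /\ forall v, 'd f x v = dotv (g x) v.

Definition strongly_convex_grad (mu : R) (g : 'rV[R]_n -> 'rV[R]_n) : Prop :=
  forall x y, dotv (g x - g y) (x - y) >= mu * dotv (x - y) (x - y).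

Definition lipschitz_grad (L : R) (g : 'rV[R]_n -> 'rV[R]_n) : Prop :=
  forall x y, norm2 (g x - g y) <= L * norm2 (x - y).

Definition is_minimizer (f : 'rV[R]_n -> R) (xs : 'rV[R]_n) : Prop :=
  forall y, f xs <= f y.

(* probability that coordinate i moves: min(|d_i f(x)|/eta, 1) *)
Definition mgd_p (g : 'rV[R]_n -> 'rV[R]_n) (eta : R) (x : 'rV[R]_n) (i : 'I_n) : R :=
  Num.min (`|g x ord0 i| / eta) 1.

(* next iterate given the realisation d of (Delta_1,...,Delta_n) *)
Definition mgd_next (g : 'rV[R]_n -> 'rV[R]_n) (alpha : R) (x : 'rV[R]_n)
  (d : {ffun 'I_n -> bool}) : 'rV[R]_n :=
  \row_(i < n) (x ord0 i - alpha * Num.sg (g x ord0 i) * (d i)%:R).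

(* E[ f(x^{t+1}) | x^t = x ]: the Delta_i are independent Bernoulli(mgd_p i) *)
Definition mgd_step_expect (f : 'rV[R]_n -> R) (g : 'rV[R]_n -> 'rV[R]_n)
  (alpha eta : R) (x : 'rV[R]_n) : R :=
  \sum_(d : {ffun 'I_n -> bool})
     (\prod_(i < n) (if d i then mgd_p g eta x i else 1 - mgd_p g eta x i))
     * f (mgd_next g alpha x d).

End MGD.

From HB Require Import structures.
From mathcomp Require Import all_boot all_order all_algebra.
From mathcomp Require Import all_classical all_reals all_analysis.
From mathcomp Require Import lra ring.
Import Order.TTheory GRing.Theory Num.Theory.
Import numFieldNormedType.Exports.
Local Open Scope ring_scope.

(* By the descent lemma, f(x^{t+1}) - f(x) is at most the sum of alpha^2 L / 2 - alpha |d_i f(x)|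
   over the coordinates i that move.  Under E^t coordinate i moves with probability
   |d_i f(x)| / eta, so the expected change is at most
   (alpha / eta) (L alpha / 2 ||grad f(x)||_1 - ||grad f(x)||^2).  Convexity turns the gap
   f(x) - f(xstar) > eps into <grad f(x), x - xstar> > eps, strong convexity then gives
   ||grad f(x)||^2 > mu eps, and ||grad f(x)||_1 <= sqrt n ||grad f(x)||; with the bound on
   alpha this makes the expected change negative. *)

Set Implicit Arguments.
Unset Strict Implicit.
Unset Printing Implicit Defensive.

Section InnerProduct.
Variables (R : realType) (n : nat).
Implicit Types (a b c : 'rV[R]_n).

Lemma dotvC a b : dotv a b = dotv b a.
Proof. by apply: eq_bigr => i _; rewrite mulrC. Qed.

Lemma dotvNl a c : dotv (- a) c = - dotv a c.
Proof. by rewrite /dotv -sumrN; apply: eq_bigr => i _; rewrite mxE mulNr. Qed.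

Lemma dotvBl a b c : dotv (a - b) c = dotv a c - dotv b c.
Proof.
rewrite /dotv -sumrB; apply: eq_bigr => i _.
by rewrite !mxE mulrDl mulNr.
Qed.

Lemma dotvZl (t : R) a c : dotv (t *: a) c = t * dotv a c.
Proof. by rewrite /dotv mulr_sumr; apply: eq_bigr => i _; rewrite mxE mulrA. Qed.

Lemma dotvZr (t : R) a c : dotv a (t *: c) = t * dotv a c.
Proof. by rewrite dotvC dotvZl dotvC. Qed.

Lemma dotv_ge0 a : 0 <= dotv a a.
Proof. by apply: sumr_ge0 => i _; rewrite -expr2 sqr_ge0. Qed.

Lemma dotv_eq0 a : dotv a a = 0 -> a = 0.
Proof.
move=> a0; apply/rowP => j; rewrite mxE.
apply/eqP; rewrite -sqrf_eq0 expr2; apply/eqP.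
by apply: (psumr_eq0P _ a0) => // i _; rewrite -expr2 sqr_ge0.
Qed.

Lemma sqr_sum_mul_le (u w : 'I_n -> R) :
  (\sum_i u i * w i) ^+ 2 <= (\sum_i u i ^+ 2) * (\sum_i w i ^+ 2).
Proof.
set A := \sum_i u i ^+ 2; set B := \sum_i w i ^+ 2; set C := \sum_i u i * w i.
have A0 : 0 <= A by apply: sumr_ge0 => i _; exact: sqr_ge0.
have [A_eq0|A_neq0] := eqVneq A 0.
  have u0 i : u i = 0.
    by apply/eqP; rewrite -sqrf_eq0; apply/eqP/(psumr_eq0P _ A_eq0) => // j _; apply: sqr_ge0.
  have -> : C = 0 by rewrite /C big1 // => i _; rewrite u0 mul0r.
  by rewrite A_eq0 expr0n mul0r.
(* [A w - C u] is [A] times the component of [w] orthogonal to [u]. *)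
have sum_sqr : \sum_i (A * w i - C * u i) ^+ 2 = A * (A * B - C ^+ 2).
  have -> : \sum_i (A * w i - C * u i) ^+ 2 =
      \sum_i (A ^+ 2 * w i ^+ 2 - 2 * A * C * (u i * w i) + C ^+ 2 * u i ^+ 2).
    by apply: eq_bigr => i _; ring.
  by rewrite big_split /= sumrB -!mulr_sumr -/A -/B -/C; ring.
have : 0 <= A * (A * B - C ^+ 2).
  by rewrite -sum_sqr; apply: sumr_ge0 => i _; exact: sqr_ge0.
by rewrite pmulr_rge0 ?subr_ge0 // lt_def A_neq0.
Qed.

Lemma dotv_sqr_le a b : dotv a b ^+ 2 <= dotv a a * dotv b b.
Proof.
have dotv_sqr c : dotv c c = \sum_i c ord0 i ^+ 2.
  by apply: eq_bigr => i _; rewrite expr2.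
by rewrite !dotv_sqr; apply: sqr_sum_mul_le.
Qed.

Lemma dotv_le_norm2 a b : dotv a b <= norm2 a * norm2 b.
Proof.
rewrite /norm2 -sqrtrM ?dotv_ge0 //; apply: le_trans (ler_norm _) _.
by rewrite -sqrtr_sqr ler_wsqrtr // dotv_sqr_le.
Qed.

Lemma norm2Z (t : R) a : 0 <= t -> norm2 (t *: a) = t * norm2 a.
Proof.
move=> t0; rewrite /norm2 dotvZl dotvZr mulrA -expr2 sqrtrM ?sqr_ge0 //.
by rewrite sqrtr_sqr ger0_norm.
Qed.

Lemma norm2_mul_self a : norm2 a * norm2 a = dotv a a.
Proof. by rewrite -expr2 sqr_sqrtr // dotv_ge0. Qed.

Lemma sqr_sum_norm_le a : (\sum_i `|a ord0 i|) ^+ 2 <= n%:R * dotv a a.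
Proof.
have := sqr_sum_mul_le (fun i => `|a ord0 i|) (fun => 1).
have -> : \sum_(i < n) (1 : R) ^+ 2 = n%:R.
  by rewrite (eq_bigr (fun=> 1)) ?sumr_const ?card_ord // => i _; rewrite expr1n.
under eq_bigr do rewrite mulr1.
rewrite mulrC => /le_trans; apply.
by rewrite ler_wpM2l // ler_sum // => i _; rewrite real_normK ?num_real // expr2.
Qed.

End InnerProduct.

Lemma ler_increment_derive (R : realType) (h k dh dk : R -> R) :
  (forall t : R, is_derive t 1 h (dh t)) -> (forall t : R, is_derive t 1 k (dk t)) ->
  (forall t : R, t \in `]0, 1[ -> dh t <= dk t) -> h 1 - h 0 <= k 1 - k 0.
Proof.
move=> hd kd le_dhk; have hkd t := is_deriveB (hd t) (kd t).
have [|c c01 mvt] := @MVT R (h - k) (dh - dk) 0 1 ltr01 (fun t _ => hkd t).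
  by apply: derivable_within_continuous => t _; exact: ex_derive.
rewrite !fctE subr0 mulr1 in mvt; have := le_dhk c c01; lra.
Qed.

Lemma lt_sqrt_div (R : rcfType) (a b c : R) :
  0 < a -> 0 < b -> a < Num.sqrt (b / c) -> 0 < c /\ a ^+ 2 * c < b.
Proof.
move=> a0 b0 lt_a; have bc0 : 0 < b / c by rewrite -sqrtr_gt0; apply: lt_trans lt_a.
have c0 : 0 < c by rewrite -invr_gt0 -(pmulr_rgt0 _ b0).
split=> //; rewrite -ltr_pdivlMr // -(sqr_sqrtr (ltW bc0)).
by rewrite ltr_pXn2r // nnegrE ?sqrtr_ge0 // (ltW a0).
Qed.

Lemma step_size_bound (R : realFieldType) (L m alpha N S eps mu : R) :
  0 <= L -> 0 <= S -> 0 < eps -> 0 < mu ->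
  alpha ^+ 2 * (L ^+ 2 * m) < 4 * eps * mu ->
  S ^+ 2 <= m * N -> mu * eps < N -> L * alpha * S < 2 * N.
Proof.
move=> L0 S0 eps0 mu0 small_alpha S_le N_gt.
have N0 : 0 < N by apply: lt_trans N_gt; rewrite mulr_gt0.
have sqr_le : (L * alpha * S) ^+ 2 <= alpha ^+ 2 * (L ^+ 2 * m) * N.
  have -> : alpha ^+ 2 * (L ^+ 2 * m) * N = (alpha * L) ^+ 2 * (m * N) by ring.
  by rewrite [L * alpha]mulrC exprMn ler_wpM2l ?sqr_ge0.
have sqr_lt : alpha ^+ 2 * (L ^+ 2 * m) * N < (2 * N) ^+ 2 by nra.
nra.
Qed.

Section Gradient.
Variables (R : realType) (n : nat) (f : 'rV[R]_n -> R) (g : 'rV[R]_n -> 'rV[R]_n).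
Hypothesis grad_fg : is_gradient f g.

Lemma is_derive_line (y v : 'rV[R]_n) (t : R) :
  is_derive t 1 (fun s : R => f (y + s *: v)) (dotv (g (y + t *: v)) v).
Proof.
have [df dfE] := grad_fg (y + t *: v).
have dv : derivable f (y + t *: v) v by exact: diff_derivable.
have := derivableP dv; rewrite deriveE // dfE => -[_ Dv].
have shift_line : (fun h : R => h^-1 *: (f (y + (h *: 1 + t) *: v) - f (y + t *: v))) =
                  (fun h : R => h^-1 *: (f (h *: v + (y + t *: v)) - f (y + t *: v))).
  by apply: funext => h; rewrite [h *: 1]mulr1 scalerDl addrCA addrA.
by split; rewrite /derivable /derive /= shift_line.
Qed.

Lemma lipschitz_grad_descent (L : R) (y v : 'rV[R]_n) : lipschitz_grad L g ->
  f (y + v) <= f y + dotv (g y) v + L / 2 * dotv v v.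
Proof.
move=> lip_g; set a := dotv (g y) v; set K := L / 2 * dotv v v.
have quad_d (t : R) : is_derive t 1 (fun s => s * a + s ^+ 2 * K) (a + 2 * t * K).
  by apply: is_derive_eq; rewrite !scaler0 !add0r /GRing.scale /=; ring.
have : forall t : R, t \in `]0, 1[ -> dotv (g (y + t *: v)) v <= a + 2 * t * K.
  move=> t; rewrite in_itv /= => /andP[t0 _].
  have lip_t : norm2 (g (y + t *: v) - g y) <= L * t * norm2 v.
    by have := lip_g (y + t *: v) y; rewrite addrAC subrr add0r (norm2Z _ (ltW t0)) mulrA.
  rewrite -lerBlDl -dotvBl; apply: le_trans (dotv_le_norm2 _ _) _.
  have -> : 2 * t * K = L * t * norm2 v * norm2 v by rewrite -[RHS]mulrA norm2_mul_self /K; field.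
  by rewrite ler_wpM2r ?sqrtr_ge0.
move=> /(ler_increment_derive (is_derive_line y v) quad_d).
rewrite !scale1r !scale0r !addr0 expr1n expr0n /= !mul1r !mul0r; lra.
Qed.

Lemma convex_grad_lower_bound (mu : R) (y v : 'rV[R]_n) :
  0 <= mu -> strongly_convex_grad mu g -> f y + dotv (g y) v <= f (y + v).
Proof.
move=> mu0 sc_g; set a := dotv (g y) v.
have lin_d (t : R) : is_derive t 1 (fun s => s * a) a.
  by apply: is_derive_eq; rewrite scaler0 add0r /GRing.scale /= mulr1.
have : forall t : R, t \in `]0, 1[ -> a <= dotv (g (y + t *: v)) v.
  move=> t; rewrite in_itv /= => /andP[t0 _].
  have := sc_g (y + t *: v) y; rewrite addrAC subrr add0r dotvZr !dotvZl dotvZr => sc_t.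
  have : 0 <= t * dotv (g (y + t *: v) - g y) v.
    by apply: le_trans sc_t; rewrite !mulr_ge0 ?dotv_ge0 // ltW.
  by rewrite pmulr_rge0 // dotvBl subr_ge0.
move=> /(ler_increment_derive lin_d (is_derive_line y v)).
rewrite !scale1r !scale0r !addr0 /= mul1r mul0r; lra.
Qed.

Lemma grad_minimizer_eq0 (xs : 'rV[R]_n) : is_minimizer f xs -> g xs = 0.
Proof.
move=> min_xs; apply: dotv_eq0; set v := g xs.
have line_d := is_derive_line xs v.
have : is_derive (0 : R) 1 (fun s : R => f (xs + s *: v)) 0.
  apply: (@derive1_at_min _ _ (-1) 1); rewrite ?in_itv /= ?ltrN10 ?ltr01 ?lerN10 //.
  by move=> t _; rewrite scale0r addr0.
move=> d0; rewrite -(@derive_val _ _ _ _ _ _ _ d0).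
by rewrite (@derive_val _ _ _ _ _ _ _ (line_d 0)) scale0r addr0.
Qed.

Lemma strongly_convex_sqr_grad_gt (mu eps : R) (xs x : 'rV[R]_n) :
  0 < mu -> strongly_convex_grad mu g -> is_minimizer f xs ->
  eps < f x - f xs -> mu * eps < dotv (g x) (g x).
Proof.
move=> mu0 sc_g min_xs gap; set N := dotv (g x) (g x).
set D := x - xs; set C := dotv (g x) D.
have gap_le : f x - f xs <= C.
  have := convex_grad_lower_bound x (xs - x) (ltW mu0) sc_g.
  rewrite addrCA subrr addr0 -opprB dotvC dotvNl dotvC -/D -/C; lra.
have sc : mu * dotv D D <= C by have := sc_g x xs; rewrite (grad_minimizer_eq0 min_xs) subr0.
have cs : C ^+ 2 <= N * dotv D D by apply: dotv_sqr_le.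
have N0 : 0 <= N by apply: dotv_ge0.
have C0 : 0 <= C by apply: le_trans sc; rewrite mulr_ge0 ?dotv_ge0 // ltW.
have muC : mu * C <= N.
  have [->|C_neq0] := eqVneq C 0; first by rewrite mulr0.
  have C_gt0 : 0 < C by rewrite lt_def C_neq0 C0.
  rewrite -(ler_pM2r C_gt0).
  have := ler_wpM2l (ltW mu0) cs; have := ler_wpM2l N0 sc; nra.
by apply: lt_le_trans muC; rewrite ltr_pM2l //; apply: lt_le_trans gap gap_le.
Qed.

End Gradient.

Lemma lipschitz_grad_ge0 (R : realType) (n : nat) (g : 'rV[R]_n -> 'rV[R]_n) (L : R) :
  (0 < n)%N -> lipschitz_grad L g -> 0 <= L.
Proof.
move=> n_gt0 lip_g; pose c : 'rV[R]_n := const_mx 1.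
have c_gt0 : 0 < norm2 c.
  rewrite sqrtr_gt0 /dotv (eq_bigr (fun=> 1)) ?sumr_const ?card_ord ?ltr0n // => i _.
  by rewrite mxE mulr1.
have := lip_g 0 (0 - c); rewrite opprB addrCA subrr addr0 => /(le_trans (sqrtr_ge0 _)).
by rewrite pmulr_lge0.
Qed.

Section BernoulliProduct.
Variables (R : realType) (n : nat) (p : 'I_n -> R).

Definition bern_prod (d : {ffun 'I_n -> bool}) : R :=
  \prod_(i < n) (if d i then p i else 1 - p i).

Lemma bern_prod_ge0 d : (forall i, 0 <= p i <= 1) -> 0 <= bern_prod d.
Proof.
move=> p01; apply: prodr_ge0 => i _; have /andP[p0 p1] := p01 i.
by case: (d i); rewrite ?subr_ge0.
Qed.

Lemma sum_bern_prod : \sum_d bern_prod d = 1.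
Proof.
rewrite /bern_prod -(bigA_distr_bigA (fun i (b : bool) => if b then p i else 1 - p i)) /=.
by apply: big1 => i _; rewrite big_bool /= addrC subrK.
Qed.

Lemma expect_bern_prod_coord i : \sum_d bern_prod d * (d i)%:R = p i.
Proof.
pose q j (b : bool) := (if b then p j else 1 - p j) * (if j == i then (b : nat)%:R else 1).
have prod_q (d : {ffun 'I_n -> bool}) : \prod_(j < n) q j (d j) = bern_prod d * (d i)%:R.
  rewrite big_split /=; congr (_ * _).
  by rewrite (bigD1 i) //= eqxx big1 ?mulr1 // => j /negbTE ->.
under eq_bigr do rewrite -prod_q.
rewrite -(bigA_distr_bigA q) /= (bigD1 i) //= big_bool /= /q eqxx mulr1 mulr0 addr0.
rewrite big1 ?mulr1 // => j /negbTE ji.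
by rewrite big_bool /= ji !mulr1 addrC subrK.
Qed.

Lemma expect_bern_prod_affine (K : R) (c : 'I_n -> R) :
  \sum_d bern_prod d * (K + \sum_i (d i)%:R * c i) = K + \sum_i p i * c i.
Proof.
under eq_bigr do rewrite mulrDr mulr_sumr.
rewrite big_split /= -mulr_suml sum_bern_prod mul1r exchange_big /=; congr (_ + _).
apply: eq_bigr => i _; rewrite -expect_bern_prod_coord mulr_suml.
by apply: eq_bigr => d _; rewrite mulrA.
Qed.

End BernoulliProduct.

Section MarkovStep.
Variables (R : realType) (n : nat) (f : 'rV[R]_n -> R) (g : 'rV[R]_n -> 'rV[R]_n).
Variables (L alpha eta : R) (x : 'rV[R]_n).
Hypotheses (grad_fg : is_gradient f g) (lip_g : lipschitz_grad L g) (L0 : 0 <= L).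

Lemma mgd_next_le d : f (mgd_next g alpha x d) <=
  f x + \sum_i (d i)%:R * (L / 2 * alpha ^+ 2 - alpha * `|g x ord0 i|).
Proof.
set G := g x; set v := mgd_next g alpha x d - x.
have := lipschitz_grad_descent grad_fg x v lip_g; rewrite addrC subrK -addrA => /le_trans.
apply; rewrite lerD2l /dotv mulr_sumr -big_split /=; apply: ler_sum => i _.
have -> : v ord0 i = - (alpha * Num.sg (G ord0 i) * (d i)%:R).
  by rewrite !mxE addrAC subrr add0r.
case: (d i); rewrite /= -/G ?mulr1; last by rewrite !(mulr0, mul0r, oppr0, addr0).
have sg2 : Num.sg (G ord0 i) ^+ 2 <= 1 by case: sgrP; rewrite ?sqrrN ?expr1n ?expr0n.
have Gsg : G ord0 i * Num.sg (G ord0 i) = `|G ord0 i| by rewrite normrEsg mulrC.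
rewrite mulrN mulrCA Gsg mulrNN -expr2 exprMn mul1r addrC lerD2r.
by rewrite ler_wpM2l ?divr_ge0 // ler_piMr ?sqr_ge0.
Qed.

Lemma mgd_step_expect_le : 0 < eta -> (forall i, `|g x ord0 i| <= eta) ->
  mgd_step_expect f g alpha eta x <=
  f x + alpha / eta * (L * alpha / 2 * \sum_i `|g x ord0 i| - dotv (g x) (g x)).
Proof.
move=> eta0 g_le_eta; set G := g x; pose p i := `|G ord0 i| / eta.
have p01 i : 0 <= p i <= 1 by rewrite /p divr_ge0 ?(ltW eta0) //= ler_pdivrMr // mul1r.
rewrite /mgd_step_expect; have -> : mgd_p g eta x = p.
  by apply: funext => i; rewrite /mgd_p min_l //; case/andP: (p01 i).
apply: (@le_trans _ _ (\sum_d bern_prod p d *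
    (f x + \sum_i (d i)%:R * (L / 2 * alpha ^+ 2 - alpha * `|G ord0 i|)))).
  by apply: ler_sum => d _; rewrite ler_wpM2l ?mgd_next_le //; exact: bern_prod_ge0.
rewrite expect_bern_prod_affine lerD2l le_eqVlt; apply/predU1P; left.
rewrite /dotv mulr_sumr -sumrB mulr_sumr; apply: eq_bigr => i _.
rewrite /p -expr2 -[G ord0 i ^+ 2]real_normK ?num_real //; field; exact: lt0r_neq0.
Qed.

End MarkovStep.

Unset Implicit Arguments.

Theorem corollary6p3 (R : realType) (n : nat) (f : 'rV[R]_n -> R)
  (g : 'rV[R]_n -> 'rV[R]_n) (mu L eps alpha eta : R) (xstar x : 'rV[R]_n) :
  is_gradient f g ->
  0 < mu -> strongly_convex_grad mu g ->
  lipschitz_grad L g ->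
  is_minimizer f xstar ->
  0 < eps -> 0 < alpha -> 0 < eta ->
  alpha < Num.sqrt (4 * eps * mu / (L ^+ 2 * n%:R)) ->
  (forall i : 'I_n, `|g x ord0 i| <= eta) ->
  f x - f xstar > eps ->
  mgd_step_expect f g alpha eta x < f x.
Proof.
move=> grad_fg mu0 sc_g lip_g min_xs eps0 alpha0 eta0 small_alpha g_le_eta gap.
have eps_mu_gt0 : 0 < 4 * eps * mu by rewrite !mulr_gt0.
have [Ln_gt0 alpha_bound] := lt_sqrt_div alpha0 eps_mu_gt0 small_alpha.
have n_gt0 : (0 < n)%N by rewrite lt0n; apply: contraTneq Ln_gt0 => ->; rewrite mulr0 ltxx.
have L0 := lipschitz_grad_ge0 n_gt0 lip_g.
have grad_gt := strongly_convex_sqr_grad_gt grad_fg mu0 sc_g min_xs gap.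
have S0 : 0 <= \sum_i `|g x ord0 i| by apply: sumr_ge0 => i _; apply: normr_ge0.
have step := step_size_bound L0 S0 eps0 mu0 alpha_bound (sqr_sum_norm_le (g x)) grad_gt.
apply: le_lt_trans (mgd_step_expect_le alpha grad_fg lip_g L0 eta0 g_le_eta) _.
rewrite gtrDl pmulr_rlt0 ?divr_gt0 // subr_lt0; lra.
Qed.
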